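(* Let $n,d$ be positive integers and let $\vec{G}$ be a digraph of order $n$ with minimum outdegree $\delta^+(\vec{G})\ge d$. Then $\vec{G}$ contains a subdigraph $\vec{H}$ such that (i) $\delta^+(\vec{H})> d/2$; (ii) $\kappa_{\vec{H}}(x,y)\ge d^2/(4n)$ for all pairs of vertices $x,y\in V(\vec{H})$ with $d^-_{\vec{H}}(y)\ge d/2$; (iii) at least $d^2/(4n)$ vertices of $\vec{H}$ have indegree at least $d/2$ in $\vec{H}$.
   Context: Digraphs have no loops, and for any ordered pair of vertices $x,y$ there is at most one edge directed from $x$ to $y$ (there may also be an edge from $y$ to $x$). $\delta^+(\vec{G})$ denotes the minimum outdegree of $\vec{G}$ and $d^-_{\vec{H}}(y)$ the indegree of $y$ in $\vec{H}$. For vertices $x,y$ of a digraph $\vec{G}$, $\kappa_{\vec{G}}(x,y)$ is defined as the largest integer $k$ with $1\le k\le |\vec{G}|-2$ such that for every vertex set $S\subseteq V(\vec{G})\setminus\{x,y\}$ with $|S|<k$, the digraph $\vec{G}-S$ contains a directed path from $x$ to $y$; and $\kappa_{\vec{G}}(x,y):=0$ if $\vec{G}$ contains no directed path from $x$ to $y$. *)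

From mathcomp Require Import all_boot all_order.
Set Implicit Arguments. Unset Strict Implicit. Unset Printing Implicit Defensive.

(* A digraph on a finite vertex type V is an edge relation e : rel V
   (e x y = there is an edge directed from x to y); "no loops" is irreflexivity.
   At most one edge per ordered pair is automatic for a relation. *)
Definition digraph (V : finType) (e : rel V) : Prop := irreflexive e.

Definition outdeg (V : finType) (S : {set V}) (f : rel V) (x : V) : nat :=
  #|[set y in S | f x y]|.
Definition indeg (V : finType) (S : {set V}) (f : rel V) (y : V) : nat :=
  #|[set x in S | f x y]|.

Definition subdigraph (V : finType) (e : rel V) (S : {set V}) (f : rel V) : Prop :=
  forall x y, f x y -> [&& x \in S, y \in S & e x y].

Definition dpath_avoid (V : finType) (f : rel V) (T : {set V}) (x y : V) : bool :=
  connect [rel u v | [&& f u v, u \notin T & v \notin T]] x y.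

Definition kappa_ok (V : finType) (S : {set V}) (f : rel V) (x y : V) (k : nat) : bool :=
  [forall T : {set V}, (T \subset S :\ x :\ y) ==> (#|T| < k) ==> dpath_avoid f T x y].

(* local connectivity kappa_(S,f)(x,y): largest k with 1 <= k <= |S|-2 that is
   admissible; 0 if there is no x->y path.  (Convention when |S| <= 2 and a path
   exists: the range is taken as 1 <= k <= max(1, |S|-2), giving value 1.) *)
Definition kappa (V : finType) (S : {set V}) (f : rel V) (x y : V) : nat :=
  if ~~ dpath_avoid f set0 x y then 0
  else \max_(1 <= k < (maxn 1 (#|S| - 2)).+1 | kappa_ok S f x y k) k.

From mathcomp Require Import all_boot all_order zify.
Set Implicit Arguments. Unset Strict Implicit. Unset Printing Implicit Defensive.

(* Call U robust when every vertex of U has at least d/2 + d|U|/(2n)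
   out-neighbours in U.  The whole vertex set is robust; take H induced on a
   smallest nonempty robust set U, so outdegrees in H exceed d/2.  If a set T
   of fewer than d^2/(4n) vertices separated x from y, with y of indegree at
   least d/2, then the set A of vertices reachable from x in H - T would be
   robust: each vertex of A loses at most |T| out-neighbours, while U \ A
   contains y and its in-neighbours, so |U \ A| > d/2 lowers the required
   degree by more than |T|.  As y is not in A, this contradicts minimality.
   Finally, counting the edges of H by heads shows that at least
   d|U|/(2n) > d^2/(4n) vertices have indegree at least d/2. *)

Lemma card_set_cond (V : finType) (U : {set V}) (p : pred V) :
  #|[set v in U | p v]| = \sum_(v in U) p v.
Proof.
rewrite -sum1dep_card big_mkcondr /=.
by apply: eq_bigr => v _; case: (p v).
Qed.

Lemma leq_kappa (V : finType) (S : {set V}) (f : rel V) x y k :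
  0 < k -> k <= maxn 1 (#|S| - 2) -> kappa_ok S f x y k -> k <= kappa S f x y.
Proof.
move=> k_gt0 k_le ok; have path0 : dpath_avoid f set0 x y.
  by have := forallP ok set0; rewrite sub0set cards0 k_gt0.
rewrite /kappa path0 /=; apply: (@leq_bigmax_seq _ _ _ (fun k => k) k) => //.
by rewrite mem_index_iota k_gt0 ltnS.
Qed.

Lemma exists_ceil_div a m : 0 < m -> exists2 k, a <= m * k & m * k < a + m.
Proof.
move=> m_gt0; have := divn_eq a m; have := ltn_pmod a m_gt0.
case: (posnP (a %% m)) => [r0|r_gt0] lt_r eq_a.
  by exists (a %/ m); lia.
by exists (a %/ m).+1; lia.
Qed.

Section Degrees.
Variables (V : finType) (e : rel V).

Definition induced (U : {set V}) : rel V :=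
  [rel a b | [&& a \in U, b \in U & e a b]].

Lemma subdigraph_induced (U : {set V}) : subdigraph e U (induced U).
Proof. by move=> x y /and3P[-> -> ->]. Qed.

Lemma outdeg_induced (U : {set V}) x :
  x \in U -> outdeg U (induced U) x = outdeg U e x.
Proof.
by move=> xU; apply: eq_card => v; rewrite !inE /induced /= xU; case: (v \in U).
Qed.

Lemma indeg_induced (U : {set V}) y :
  y \in U -> indeg U (induced U) y = indeg U e y.
Proof.
by move=> yU; apply: eq_card => v; rewrite !inE /induced /= yU; case: (v \in U).
Qed.

Lemma sum_outdeg_indeg (U : {set V}) :
  \sum_(u in U) outdeg U e u = \sum_(u in U) indeg U e u.
Proof.
rewrite /outdeg /indeg; under eq_bigr do rewrite card_set_cond.
under [RHS]eq_bigr do rewrite card_set_cond.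
exact: exchange_big.
Qed.

Lemma outdeg_lt_card (U : {set V}) u :
  irreflexive e -> u \in U -> outdeg U e u < #|U|.
Proof.
move=> irr uU; apply: proper_card; apply/properP; split.
  by apply/subsetP=> v; rewrite inE => /andP[].
by exists u => //; rewrite inE irr andbF.
Qed.

Lemma indeg_le_card (U : {set V}) y : indeg U e y <= #|U|.
Proof. by apply/subset_leq_card/subsetP => v; rewrite inE => /andP[]. Qed.

Lemma outdeg_le_addn (A T U : {set V}) u :
  {in U, forall v, e u v -> v \in A :|: T} ->
  outdeg U e u <= outdeg A e u + #|T|.
Proof.
move=> sub; apply: leq_trans (leq_card_setU _ T); apply: subset_leq_card.
apply/subsetP => v; rewrite inE => /andP[vU euv].
by have := sub v vU euv; rewrite !inE euv andbT.
Qed.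

Lemma indeg_lt_card_setD (A U : {set V}) y :
  irreflexive e -> y \in U -> y \notin A ->
  {in A, forall v, ~~ e v y} -> indeg U e y < #|U :\: A|.
Proof.
move=> irr yU yA noA; rewrite /indeg.
have := cardsU1 y [set v in U | e v y]; rewrite inE irr andbF add1n => <-.
apply: subset_leq_card; apply/subsetP => v; rewrite !inE.
case/predU1P => [->|/andP[vU evy]]; first by rewrite yA yU.
by rewrite vU andbT; apply: contraL evy; apply: noA.
Qed.

End Degrees.

Section Robust.
Variables (V : finType) (e : rel V) (n d : nat).

(* Outdegree at least d/2 + d|U|/(2n) inside U, cleared of denominators. *)
Definition robust (U : {set V}) : bool :=
  [forall u in U, d * (n + #|U|) <= 2 * n * outdeg U e u].

Lemma robust_setT : #|V| = n -> (forall v, d <= outdeg [set: V] e v) ->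
  robust [set: V].
Proof.
move=> cardV outV; apply/forall_inP => u _; rewrite cardsT cardV.
by have := outV u; nia.
Qed.

Lemma robust_outdeg_gt (U : {set V}) u : 0 < d -> robust U -> u \in U ->
  d < 2 * outdeg U e u.
Proof.
move=> d_gt0 rU uU; have := forall_inP rU u uU.
have : 0 < #|U| by apply/card_gt0P; exists u.
nia.
Qed.

Lemma robust_subset (U A : {set V}) t : A \subset U -> robust U ->
  2 * n * t <= d * #|U :\: A| ->
  {in A, forall u, outdeg U e u <= outdeg A e u + t} -> robust A.
Proof.
move=> sAU rU small_t outA; apply/forall_inP => u uA.
have := forall_inP rU u (subsetP sAU u uA); have := outA u uA.
have := cardsID A U; rewrite (setIidPr sAU).
nia.
Qed.

Lemma robust_high_indeg (U : {set V}) : robust U ->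
  d * #|U| <= 2 * n * #|[set y in U | d <= 2 * indeg U e y]|.
Proof.
move=> rU; set m := #|[set y in U | _]|.
have sum_out :
    \sum_(u in U) d * (n + #|U|) <= 2 * n * \sum_(u in U) indeg U e u.
  rewrite -sum_outdeg_indeg big_distrr /=.
  by apply: leq_sum => u uU; apply: (forall_inP rU).
have sum_in : 2 * \sum_(u in U) indeg U e u <=
              \sum_(u in U) (2 * #|U| * (d <= 2 * indeg U e u) + d).
  rewrite big_distrr; apply: leq_sum => u _; have := indeg_le_card e U u.
  by case: leqP => /=; nia.
rewrite big_split sum_nat_const -big_distrr -card_set_cond -/m /= in sum_in.
rewrite sum_nat_const in sum_out.
case: (posnP #|U|) => [->|U_gt0]; first by rewrite muln0.
rewrite -(leq_pmul2l U_gt0); nia.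
Qed.

Section Minimal.
Variable U : {set V}.
Hypotheses (irr : irreflexive e) (d_gt0 : 0 < d) (rU : robust U)
  (minU : forall A, A != set0 -> robust A -> #|U| <= #|A|).

Lemma minimal_robust_dpath x y (T : {set V}) : x \in U -> y \in U ->
  d <= 2 * indeg U e y -> T \subset U :\ x :\ y -> 4 * n * #|T| < d ^ 2 ->
  dpath_avoid (induced e U) T x y.
Proof.
move=> xU yU y_in sT small_T; apply: contraT => no_path.
have xT : x \notin T by apply/negP => /(subsetP sT); rewrite !inE eqxx andbF.
have yT : y \notin T by apply/negP => /(subsetP sT); rewrite !inE eqxx.
pose A := [set v in U | (v \notin T) && dpath_avoid (induced e U) T x v].
have xA : x \in A by rewrite inE xU xT /dpath_avoid connect0.
have yA : y \notin A by rewrite inE (negbTE no_path) !andbF.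
have sAU : A \subset U by apply/subsetP => v; rewrite inE => /andP[].
have A_closed u v : u \in A -> v \in U -> v \notin T -> e u v -> v \in A.
  rewrite inE => /and3P[uU uT path_u] vU vT euv.
  rewrite inE vU vT /=; apply: (connect_trans path_u); apply: connect1.
  by rewrite /= /induced /= uU vU euv uT vT.
have outA : {in A, forall u, outdeg U e u <= outdeg A e u + #|T|}.
  move=> u uA; apply: outdeg_le_addn => v vU euv; rewrite inE orbC.
  by case: (boolP (v \in T)) => //= vT; apply: A_closed euv.
have in_y := indeg_lt_card_setD irr yU yA
  (fun v vA => contra (A_closed v y vA yU yT) yA).
have rA : robust A by apply: (robust_subset sAU rU _ outA); nia.
have A_lt_U : #|A| < #|U| by apply/proper_card/properP; split=> //; exists y.
have A_gt0 : A != set0 by apply/set0Pn; exists x.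
by have := minU A_gt0 rA; lia.
Qed.

Lemma minimal_robust_kappa x y : d < n -> x \in U -> y \in U ->
  d <= 2 * indeg U e y -> d ^ 2 <= 4 * n * kappa U (induced e U) x y.
Proof.
move=> d_lt_n xU yU y_in; have n4_gt0 : 0 < 4 * n by lia.
have [k d2_le k_lt] := exists_ceil_div (d ^ 2) n4_gt0.
apply: (leq_trans d2_le); rewrite leq_mul2l; apply/orP; right.
have k_gt0 : 0 < k by nia.
have k_small : 4 * k < d + 4.
  have : n * (4 * k) < n * (d + 4) by nia.
  by rewrite ltn_pmul2l //; lia.
have := robust_outdeg_gt d_gt0 rU xU; have := outdeg_lt_card irr xU.
move=> out_lt out_gt; apply: leq_kappa => //; first by rewrite leq_max; lia.
apply/forallP => T; apply/implyP => sT; apply/implyP => T_lt.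
by apply: minimal_robust_dpath => //; nia.
Qed.

End Minimal.
End Robust.

Theorem lemma4 (V : finType) (e : rel V) (n d : nat) :
  0 < n -> 0 < d -> digraph e -> #|V| = n ->
  (forall v : V, d <= outdeg [set: V] e v) ->
  exists (S : {set V}) (f : rel V),
    subdigraph e S f /\
    (forall x, x \in S -> d < 2 * outdeg S f x) /\
    (forall x y, x \in S -> y \in S -> d <= 2 * indeg S f y ->
       d ^ 2 <= 4 * n * kappa S f x y) /\
    d ^ 2 <= 4 * n * #|[set y in S | d <= 2 * indeg S f y]|.
Proof.
move=> n_gt0 d_gt0 irr cardV outV.
have [v0 _] : exists v : V, v \in V by apply/card_gt0P; rewrite cardV.
have d_lt_n : d < n.
  rewrite -cardV -cardsT.
  exact: leq_ltn_trans (outV v0) (outdeg_lt_card irr (in_setT v0)).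
pose P (U : {set V}) := (U != set0) && robust e n d U.
have PT : P [set: V].
  by rewrite /P robust_setT // andbT; apply/set0Pn; exists v0.
have [U /andP[U_n0 rU] minU] := arg_minnP (fun U : {set V} => #|U|) PT.
have {}minU A : A != set0 -> robust e n d A -> #|U| <= #|A|.
  by move=> A_n0 rA; apply: minU; apply/andP.
have [x0 x0U] := set0Pn _ U_n0.
exists U, (induced e U); split; first exact: subdigraph_induced.
split=> [x xU|]; first by rewrite outdeg_induced //; apply: robust_outdeg_gt rU xU.
split.
  move=> x y xU yU; rewrite indeg_induced // => y_in.
  exact: minimal_robust_kappa.
have -> : [set y in U | d <= 2 * indeg U (induced e U) y] =
          [set y in U | d <= 2 * indeg U e y].
  apply/setP => y; rewrite !inE.
  by case yU: (y \in U); rewrite //= indeg_induced.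
have := robust_high_indeg rU; have := robust_outdeg_gt d_gt0 rU x0U.
have := outdeg_lt_card irr x0U; nia.
Qed.
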